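(* Let $S$ be a non-empty finite set of strings and run the algorithm Greedy-R on $S$. After the initial call to Make-Reverse-Factor-Free, the current set $S$ remains reverse-factor-free after each iteration of the while loop.
   Context: For strings $x,y$, $\mathit{ov}(x,y)$ is the length of the longest suffix of $x$ that is also a prefix of $y$; $\mathrm{pref}(x,y)$ is $x$ with its suffix of length $\mathit{ov}(x,y)$ removed, and $x\otimes y=\mathrm{pref}(x,y)\,y$. $x^R$ denotes the reversal of $x$. For a set $X$ of strings, $\widetilde{X}=X\cup\{x^R:x\in X\}$. A set $X$ is reverse-factor-free if there are no distinct $x,y\in X$ such that $x$ is a factor of $y$ or of $y^R$. The procedure Make-Reverse-Factor-Free$(X)$ repeatedly removes from the current set a string $x$ for which some other string $y\neq x$ of the current set has $x$ as a factor of $y$ or of $y^R$, until no such string remains. Algorithm Greedy-R$(S)$: first set $S:=$ Make-Reverse-Factor-Free$(S)$. Then, while $|S|>1$: among all pairs $(u,v)$ with $u,v\in\widetilde{S}$ and $u\notin\{v,v^R\}$, choose one with maximal $\mathit{ov}(u,v)$ (ties broken arbitrarily); set $S:=S\cup\{u\otimes v\}$ and then remove from $S$ all of $u,v,u^R,v^R$ that belong to $S$. Return the only element of $S$. *)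

From HB Require Import structures.
From mathcomp Require Import all_boot finmap.
Set Implicit Arguments.
Unset Strict Implicit.
Unset Printing Implicit Defensive.
Local Open Scope fset_scope.

Section Strings.
Variable T : choiceType.
Implicit Types x y u v : seq T.
Implicit Types X : {fset seq T}.

Definition factor x y : bool := infix x y.

(* ov(x,y): length of the longest suffix of x that is also a prefix of y *)
Definition ov x y : nat :=
  \max_(k < (minn (size x) (size y)).+1 | drop (size x - k) x == take k y) k.

Definition pref x y : seq T := take (size x - ov x y) x.

Definition otimes x y : seq T := pref x y ++ y.

Definition tilde X : {fset seq T} := X `|` [fset rev x | x in X].

Definition rff X : Prop :=
  forall x y, x \in X -> y \in X -> x != y -> ~~ factor x y /\ ~~ factor x (rev y).

Definition mrff_step X X' : Prop :=
  exists x y, [/\ x \in X, y \in X, y != x, factor x y || factor x (rev y)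
                & X' = X `\ x].

Inductive rtc (R : {fset seq T} -> {fset seq T} -> Prop) :
    {fset seq T} -> {fset seq T} -> Prop :=
| rtc_refl X : rtc R X X
| rtc_step X Y Z : R X Y -> rtc R Y Z -> rtc R X Z.

(* X is a possible output of Make-Reverse-Factor-Free(X0):
   removal steps are repeated until no removable string remains *)
Definition mrff_run X0 X : Prop :=
  rtc mrff_step X0 X /\
  ~ (exists x y, [/\ x \in X, y \in X, y != x & factor x y || factor x (rev y)]).

(* one iteration of the while loop of Greedy-R (ties broken arbitrarily) *)
Definition greedy_step X X' : Prop :=
  1 < #|` X| /\
  exists u v, [/\ u \in tilde X, v \in tilde X, u != v /\ u != rev v,
     (forall u' v', u' \in tilde X -> v' \in tilde X -> u' != v' -> u' != rev v' ->
        ov u' v' <= ov u v)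
   & X' = (X `|` [fset otimes u v]) `\` [fset u; v; rev u; rev v]].

End Strings.

(* A string z of the current set that occurs in w = u ⊗ v but neither in u nor
   in v must straddle the junction of u and v; the part of z inside u is then a
   suffix of u that is a prefix of z and is longer than ov(u,v), contradicting
   the maximality of the chosen pair (both z and z^R are candidates paired with
   u).  Conversely nothing can contain w since w contains u. *)
From HB Require Import structures.
From mathcomp Require Import all_boot finmap.
From mathcomp Require Import zify.
Local Open Scope fset_scope.

Lemma rtc_invariant (T : choiceType) (R : {fset seq T} -> {fset seq T} -> Prop)
    (P : {fset seq T} -> Prop) X Y :
  (forall X Y, P X -> R X Y -> P Y) -> rtc R X Y -> P X -> P Y.
Proof. by move=> stepP; elim=> // X1 X2 X3 R12 _ IH /stepP/(_ R12). Qed.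

Section Overlap.
Context {T : choiceType}.
Implicit Types x y u v z : seq T.

Lemma ov_spec x y : ov x y <= minn (size x) (size y) /\
  drop (size x - ov x y) x = take (ov x y) y.
Proof.
rewrite /ov (bigmax_eq_arg ord0) /=; last by rewrite subn0 drop_size take0.
case: arg_maxnP => /=; first by rewrite subn0 drop_size take0.
by move=> i /eqP Pi _; split; rewrite // -ltnS ltn_ord.
Qed.

Lemma ov_max x y j : j <= minn (size x) (size y) ->
  drop (size x - j) x = take j y -> j <= ov x y.
Proof.
move=> hj he; rewrite /ov.
by apply: (bigmax_sup (Ordinal (hj : j < (minn (size x) (size y)).+1))) => //=; apply/eqP.
Qed.

Lemma otimesE u v : otimes u v = u ++ drop (ov u v) v.
Proof.
have [_ ovE] := ov_spec u v; rewrite /otimes /pref; set k := ov u v in ovE *.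
by rewrite -{1}(cat_take_drop k v) -ovE catA cat_take_drop.
Qed.

Lemma infix_otimes u v : infix u (otimes u v).
Proof. by rewrite otimesE prefix_infix. Qed.

Lemma ov_lt_straddle u v z : infix z (otimes u v) ->
  ~~ infix z u -> ~~ infix z v -> ov u v < ov u z.
Proof.
have [hk ovE] := ov_spec u v; set k := ov u v in hk ovE *.
have wl : otimes u v = take (size u - k) u ++ v by [].
have wr := otimesE u v; rewrite -/k in wr.
set w := otimes u v in wl wr *.
have hku : k <= size u by move: hk; rewrite leq_min => /andP[].
have uE : take (size u) w = u by rewrite wr take_size_cat.
move=> /infixP [p [s ws]] nzu nzv.
have zsE : drop (size p) w = z ++ s by rewrite ws drop_size_cat.
case: (leqP (size p + size z) (size u)) => z_in_u.
  case/negP: nzu; rewrite -uE.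
  apply: (@infix_trans _ (take (size p + size z) w)).
    by rewrite ws catA take_size_cat ?size_cat // suffix_infix.
  by rewrite -(take_takel _ z_in_u) infix_take.
case: (leqP (size u - k) (size p)) => z_in_v.
  case/negP: nzv.
  have -> : v = drop (size u - k) w by rewrite wl drop_size_cat // size_takel ?leq_subr.
  apply: (@infix_trans _ (drop (size p) w)); first by rewrite zsE prefix_infix.
  by rewrite -(subnK z_in_v) -drop_drop infix_drop.
apply: (@leq_trans (size u - size p)); first by lia.
apply: ov_max; first by rewrite leq_min; apply/andP; split; lia.
have -> : size u - (size u - size p) = size p by lia.
have e : take (size u - size p) (drop (size p) w) = drop (size p) u.
  by rewrite take_drop subnK ?uE //; lia.
by rewrite -e zsE takel_cat //; lia.
Qed.

End Overlap.

Section Reverse.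
Context {T : choiceType}.
Implicit Types x a : seq T.
Implicit Types X : {fset seq T}.

Lemma mem_tilde {X x} : x \in X -> x \in tilde X.
Proof. by rewrite /tilde inE => ->. Qed.

Lemma rev_tilde {X a} : a \in tilde X -> rev a \in tilde X.
Proof.
rewrite /tilde !inE => /orP [ha|/imfsetP [z /= hz ->]].
  by apply/orP; right; apply/imfsetP; exists a.
by rewrite revK hz.
Qed.

Lemma rff_tilde {X x a} : rff X -> x \in X -> a \in tilde X ->
  x != a -> x != rev a -> ~~ infix x a /\ ~~ infix a x.
Proof.
move=> hr hx; rewrite /tilde !inE => /orP [ha|/imfsetP [z /= hz ->]] n1 n2.
  have [-> _] := hr x a hx ha n1.
  by have [] := hr a x ha hx; rewrite 1?eq_sym.
rewrite revK in n2; rewrite infix_revLR.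
have [_ ->] := hr x z hx hz n2.
by have [] := hr z x hz hx; rewrite 1?eq_sym.
Qed.

Lemma mrff_run_rff X0 X : mrff_run X0 X -> rff X.
Proof.
move=> [_ irreducible] x y hx hy nxy; split; apply/negP => hf; apply: irreducible.
  by exists x, y; rewrite eq_sym nxy hf.
by exists x, y; rewrite eq_sym nxy hf orbT.
Qed.

End Reverse.

Section GreedyStep.
Context {T : choiceType}.
Context {X : {fset seq T}} {u v : seq T}.
Hypotheses (rffX : rff X) (uX : u \in tilde X) (vX : v \in tilde X).
Hypothesis ov_uv_max : forall u' v', u' \in tilde X -> v' \in tilde X ->
  u' != v' -> u' != rev v' -> ov u' v' <= ov u v.

Let w := otimes u v.

Lemma not_infix_merge z : z \in tilde X -> u != z -> u != rev z ->
  ~~ infix z u -> ~~ infix z v -> ~~ infix z w.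
Proof.
move=> zX uz urz nzu nzv; apply/negP => /ov_lt_straddle/(_ nzu nzv).
by rewrite ltnNge ov_uv_max.
Qed.

Lemma merge_independent x : x \in X -> x != u -> x != v -> x != rev u -> x != rev v ->
  ~~ infix x w /\ ~~ infix x (rev w) /\ ~~ infix w x /\ ~~ infix w (rev x).
Proof.
move=> xX xu xv xru xrv.
have [nxu nux] := rff_tilde rffX xX uX xu xru.
have [nxv _] := rff_tilde rffX xX vX xv xrv.
have [nxru nrux] : ~~ infix x (rev u) /\ ~~ infix (rev u) x.
  by apply: rff_tilde (rev_tilde uX) _ _; rewrite ?revK.
have [nxrv _] : ~~ infix x (rev v) /\ ~~ infix (rev v) x.
  by apply: rff_tilde (rev_tilde vX) _ _; rewrite ?revK.
have ux : u != x by rewrite eq_sym.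
have urx : u != rev x by apply: contraNneq xru => ->; rewrite revK.
have uw : infix u w := infix_otimes u v.
split; first exact: not_infix_merge (mem_tilde xX) ux urx nxu nxv.
split.
  rewrite -infix_revLR.
  by apply: not_infix_merge (rev_tilde (mem_tilde xX)) _ _ _ _; rewrite ?revK ?infix_revLR.
split; apply/negP => wx.
  by move/negP: nux; apply; apply: infix_trans uw wx.
by move/negP: nrux; apply; rewrite infix_revLR; apply: infix_trans uw wx.
Qed.

End GreedyStep.

Lemma greedy_step_rff (T : choiceType) (X X' : {fset seq T}) :
  rff X -> greedy_step X X' -> rff X'.
Proof.
move=> rffX [_ [u [v [uX vX _ ov_uv_max ->]]]].
have indep := merge_independent rffX uX vX ov_uv_max.
have mem_next z : z \in (X `|` [fset otimes u v]) `\` [fset u; v; rev u; rev v] ->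
    [/\ z != u, z != v, z != rev u, z != rev v & (z \in X) || (z == otimes u v)].
  by rewrite !inE !negb_or -!andbA => /and5P [].
move=> x y /mem_next [xu xv xru xrv /orP [xX|/eqP->]]
           /mem_next [yu yv yru yrv /orP [yX|/eqP->]] xy.
- exact: rffX.
- by rewrite /factor; have [-> [->]] := indep x xX xu xv xru xrv.
- by rewrite /factor; have [_ [_ [-> ->]]] := indep y yX yu yv yru yrv.
- by rewrite eqxx in xy.
Qed.

Theorem lemma1 (T : choiceType) (S0 S : {fset seq T}) :
  S0 != fset0 -> mrff_run S0 S ->
  forall S' : {fset seq T}, rtc (@greedy_step T) S S' -> rff S'.
Proof.
move=> _ /mrff_run_rff rffS S' run.
exact: rtc_invariant (@greedy_step_rff T) run rffS.
Qed.
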